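(* Let $G=(V,E)$ be a network with $n$ sources $s_1,\dots,s_n$ and two terminals $t_1,t_2$, such that for every $i\in\{1,\dots,n\}$ and $j\in\{1,2\}$ the max-flow from $s_i$ to $t_j$ is at least $1$. Then there exists a linear network code over $\mathbb{F}=GF(2^m)$ such that each terminal $t_j$ can recover $\sum_{i=1}^n X_i$ from the symbols on its incoming edges.
   Context: A network is a finite directed acyclic graph $G=(V,E)$ (parallel edges allowed) in which every edge has unit capacity and carries one symbol of a finite field $\mathbb{F}$ per use. Sources are vertices with no incoming edges; source $s_i$ holds $X_i\in\mathbb{F}$, the $X_i$ independent and uniformly distributed (unit entropy). Terminals are vertices with no outgoing edges. In a linear network code the symbol on an edge leaving a non-source vertex is an $\mathbb{F}$-linear combination of the symbols on the edges entering its tail, and the symbol on an edge leaving a source is a multiple of the source symbol. *)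

From HB Require Import structures.
From mathcomp Require Import all_boot all_order all_algebra all_field.
Set Implicit Arguments. Unset Strict Implicit. Unset Printing Implicit Defensive.
Import Order.TTheory GRing.Theory Num.Theory.
Local Open Scope ring_scope.

Section Network.
Variables (V E : finType) (tail head : E -> V).

Definition adj : rel V := fun u v => [exists e, (tail e == u) && (head e == v)].

Definition acyclic : Prop := forall e : E, ~~ connect adj (head e) (tail e).

Definition is_source (v : V) : bool := [forall e, head e != v].
Definition is_terminal (v : V) : bool := [forall e, tail e != v].

Definition is_flow (f : E -> rat) (s t : V) : Prop :=
  (forall e, 0 <= f e <= 1) /\
  (forall v, v != s -> v != t ->
     \sum_(e | head e == v) f e = \sum_(e | tail e == v) f e).

Definition flow_value (f : E -> rat) (s : V) : rat :=
  \sum_(e | tail e == s) f e - \sum_(e | head e == s) f e.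

Definition maxflow_ge1 (s t : V) : Prop :=
  exists f : E -> rat, is_flow f s t /\ 1 <= flow_value f s.

(* A linear network code over F for sources s : 'I_n -> V:
   [srcc e] is the coefficient used on an edge leaving a source,
   [loc e' e] is the local coefficient of incoming edge e' on edge e. *)
Record lin_code (F : fieldType) := LinCode {
  srcc : E -> F;
  loc : E -> E -> F
}.

Definition edge_symbols (F : fieldType) (n : nat) (s : 'I_n -> V)
    (c : lin_code F) (X : 'I_n -> F) (y : E -> F) : Prop :=
  forall e : E,
    (forall i, tail e = s i -> y e = srcc c e * X i) /\
    ((forall i, tail e != s i) ->
       y e = \sum_(e' | head e' == tail e) loc c e' e * y e').

Definition incoming (F : fieldType) (t : V) (y : E -> F) : {ffun E -> F} :=
  [ffun e => if head e == t then y e else 0].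

Definition recovers_sum (F : fieldType) (n : nat) (s : 'I_n -> V)
    (c : lin_code F) (t : V) : Prop :=
  exists dec : {ffun E -> F} -> F,
    forall (X : 'I_n -> F) (y : E -> F),
      edge_symbols s c X y -> dec (incoming t y) = \sum_(i < n) X i.

End Network.

From HB Require Import structures.
From mathcomp Require Import all_boot all_order all_algebra all_field.
Import Order.TTheory GRing.Theory Num.Theory.
Local Open Scope ring_scope.

(* Every vertex v forwards one symbol, the weighted sum of its incoming
   symbols, on all its out-edges, where the weights w(e) in {0,1} are chosen
   so that, for each terminal t, the indicator phi_t(v) = [v reaches t] is
   w-harmonic away from t: phi_t(v) = sum_{e : v -> u} w(e) phi_t(u).  Weighting
   the symbols by phi_t and summing over all vertices, the incoming and
   outgoing contributions cancel everywhere except at the sources, each of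
   which contributes its message (phi_t = 1 there by the max-flow hypothesis),
   and at t, which contributes the weighted sum of its incoming symbols; so
   that weighted sum is X_1 + ... + X_n.  The weights send everything along one
   out-edge reaching both terminals when there is one, and otherwise along one
   out-edge reaching t_1 only plus one reaching t_2 only.  Neither acyclicity
   nor the characteristic of the field plays any role. *)

Lemma sum_fibers_cond {R : zmodType} {I J : finType} (p : I -> J) (P : pred J)
    (F : I -> R) :
  \sum_(j | P j) \sum_(i | p i == j) F i = \sum_(i | P (p i)) F i.
Proof.
rewrite (partition_big p P) //=; apply: eq_bigr => j Pj; apply: eq_bigl => i.
by case: (p i =P j) => [->|]; rewrite ?andbT ?andbF ?Pj.
Qed.

Lemma sum_fibers {R : zmodType} {I J : finType} (p : I -> J) (F : I -> R) :
  \sum_j \sum_(i | p i == j) F i = \sum_i F i.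
Proof. exact: (sum_fibers_cond p predT). Qed.

Lemma sum_indicator_option {R : pzRingType} {T : finType} (o : option T)
    (P : pred T) (g : T -> R) :
  (forall x, o = Some x -> P x) ->
  \sum_(x | P x) (o == Some x)%:R * g x = if o is Some x0 then g x0 else 0.
Proof.
case: o => [x0|] Px0; last by rewrite big1 // => x _; rewrite mul0r.
rewrite (bigD1 x0) ?Px0 //= eqxx mul1r big1 ?addr0 // => x /andP[_ nx].
by rewrite (inj_eq Some_inj) eq_sym (negbTE nx) mul0r.
Qed.

Section Network.
Context {V E : finType} (tail head : E -> V).

Notation reaches t v := (connect (adj tail head) v t).

Lemma adj_edge e : adj tail head (tail e) (head e).
Proof. by apply/existsP; exists e; rewrite !eqxx. Qed.

Lemma reaches_tail {t e} : reaches t (head e) -> reaches t (tail e).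
Proof. exact/connect_trans/connect1/adj_edge. Qed.

Lemma reaches_out_edge {t v} :
  reaches t v -> v != t -> exists e, (tail e == v) && reaches t (head e).
Proof.
case/connectP => [[|x p]] /=; first by move=> _ ->; rewrite eqxx.
case/andP => /existsP [e /andP[te /eqP he]] pth lst _.
by exists e; rewrite te he; apply/connectP; exists p.
Qed.

(* Summing conservation over the set R of vertices reachable from s, the net
   inflow into R is minus the flow value; it is nonnegative since no edge
   leaves R. *)
Lemma maxflow_ge1_reaches {s t} : maxflow_ge1 tail head s t -> reaches t s.
Proof.
case=> f [[f01 conserv] val1]; apply/idPn => nst.
pose R v := connect (adj tail head) s v.
have R_head e : R (tail e) -> R (head e).
  by move/connect_trans; apply; apply/connect1/adj_edge.
have out_le_in : \sum_(e | R (tail e)) f e <= \sum_(e | R (head e)) f e.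
  rewrite big_mkcond [X in _ <= X]big_mkcond /=; apply: ler_sum => e _.
  case Rt: (R (tail e)); first by rewrite R_head.
  by case: (R (head e)); case/andP: (f01 e).
have net_in : \sum_(v | R v)
    (\sum_(e | head e == v) f e - \sum_(e | tail e == v) f e)
    = - flow_value tail head f s.
  rewrite (bigD1 s) /=; last exact: connect0.
  rewrite [X in _ + X]big1 ?addr0 /flow_value ?opprB //.
  move=> v /andP[Rv nvs]; rewrite conserv ?subrr //.
  by apply: contraNneq nst => <-.
rewrite sumrB !sum_fibers_cond in net_in.
have : 0 <= - flow_value tail head f s by rewrite -net_in subr_ge0.
by rewrite oppr_ge0 => /(le_trans val1).
Qed.

Lemma maxflow_ge1_out_edge {s t} :
  maxflow_ge1 tail head s t -> exists e, tail e == s.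
Proof.
case=> f [[f01 _] val1]; apply/existsP/contraT; rewrite negb_exists => /forallP no.
move: val1; rewrite /flow_value big_pred0 => [|e]; last exact/negbTE/no.
rewrite sub0r leNgt => /negP[]; rewrite (le_lt_trans _ ltr01) // oppr_le0.
by apply: sumr_ge0 => e _; case/andP: (f01 e).
Qed.

Definition pick_out_edge (P : pred V) (v : V) : option E :=
  [pick e | (tail e == v) && P (head e)].

Lemma pick_out_edgeP P v :
  pick_spec (fun e => (tail e == v) && P (head e)) (pick_out_edge P v).
Proof. exact: pickP. Qed.

Lemma pick_out_edge_tail P v e : pick_out_edge P v = Some e -> tail e == v.
Proof. by case: pick_out_edgeP => // e' /andP[/eqP <- _] [<-]. Qed.

Context {F : fieldType}.

Definition uniform_code (w : E -> F) : lin_code E F :=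
  LinCode (fun=> 1) (fun e' _ => w e').

Definition harmonic (w : E -> F) (t : V) (phi : V -> F) : Prop :=
  forall v, v != t -> phi v = \sum_(e | tail e == v) w e * phi (head e).

Lemma eq_harmonic {w1 w2 t phi} :
  w1 =1 w2 -> harmonic w1 t phi -> harmonic w2 t phi.
Proof. by move=> w12 harm v nv; rewrite harm //; apply: eq_bigr => e _; rewrite w12. Qed.

Section UniformCode.
Context {n : nat} {s : 'I_n -> V} {w : E -> F} {t : V} {phi : V -> F}.
Hypotheses (s_inj : injective s) (phi_harmonic : harmonic w t phi).
Hypotheses (phi_t : phi t = 1) (phi_s : forall i, phi (s i) = 1).
Hypotheses (t_terminal : forall e, tail e != t) (s_t : forall i, s i != t).
Hypothesis s_source : forall i e, head e != s i.

Definition weighted_in (y : E -> F) (v : V) : F :=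
  \sum_(e | head e == v) w e * y e.

Section Symbols.
Variables (X : 'I_n -> F) (y : E -> F).
Hypothesis y_code : edge_symbols tail head s (uniform_code w) X y.

Lemma uniform_code_source {i e} : tail e = s i -> y e = X i.
Proof. by move/((y_code e).1 i); rewrite mul1r. Qed.

Lemma uniform_code_inner e :
  (forall i, tail e != s i) -> y e = weighted_in y (tail e).
Proof. exact: (y_code e).2. Qed.

Lemma uniform_code_balance v :
  phi v * weighted_in y v
    - \sum_(e | tail e == v) w e * y e * phi (head e)
  = (v == t)%:R * weighted_in y t - \sum_(i | s i == v) X i.
Proof.
have [i /eqP <- | not_src] := pickP (fun i => s i == v).
  have -> : weighted_in y (s i) = 0.
    by rewrite /weighted_in big_pred0 // => e; apply/negbTE/s_source.
  rewrite (negbTE (s_t i)) mul0r mulr0 (big_pred1 i) => [|j]; last first.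
    by rewrite /= (inj_eq s_inj).
  rewrite (eq_bigr (fun e => X i * (w e * phi (head e)))) => [|e /eqP te].
    by rewrite -mulr_sumr -phi_harmonic // phi_s mulr1 !sub0r.
  by rewrite (uniform_code_source te) mulrCA mulrA.
rewrite (big_pred0 _ _ _ _ not_src) subr0.
rewrite (eq_bigr (fun e => weighted_in y v * (w e * phi (head e)))) => [|e /eqP te].
  rewrite -mulr_sumr; have [-> | nvt] := eqVneq v t.
    by rewrite big_pred0 => [|e]; rewrite ?mulr0 ?subr0 ?phi_t //; apply/negbTE.
  by rewrite -phi_harmonic // mul0r mulrC subrr.
rewrite uniform_code_inner => [|i]; last by rewrite te eq_sym not_src.
by rewrite te mulrCA mulrA.
Qed.

Lemma uniform_code_flux : weighted_in y t = \sum_(i < n) X i.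
Proof.
have total : \sum_v (phi v * weighted_in y v
    - \sum_(e | tail e == v) w e * y e * phi (head e)) = 0.
  apply/eqP; rewrite sumrB sum_fibers subr_eq0 -(sum_fibers head); apply/eqP/eq_bigr => v _.
  by rewrite /weighted_in mulr_sumr; apply: eq_bigr => e /eqP ->; rewrite mulrC.
move: total; rewrite (eq_bigr _ (fun v _ => uniform_code_balance v)) sumrB.
rewrite sum_fibers (bigD1 t) //= eqxx mul1r big1 ?addr0 => [|v /negbTE ->].
  by move/eqP; rewrite subr_eq0 => /eqP.
by rewrite mul0r.
Qed.

End Symbols.

Lemma uniform_code_recovers : recovers_sum tail head s (uniform_code w) t.
Proof.
exists (fun g : {ffun E -> F} => \sum_e w e * g e) => X y y_code.
rewrite -(uniform_code_flux _ _ y_code) /weighted_in [RHS]big_mkcond.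
by apply: eq_bigr => e _; rewrite /incoming ffunE; case: ifP; rewrite ?mulr0.
Qed.

End UniformCode.

Definition split_weight (t1 t2 : V) (e : E) : F :=
  let both := pick_out_edge (fun u => reaches t1 u && reaches t2 u) in
  let only1 := pick_out_edge (fun u => reaches t1 u && ~~ reaches t2 u) in
  let only2 := pick_out_edge (fun u => reaches t2 u && ~~ reaches t1 u) in
  if both (tail e) is Some _ then (both (tail e) == Some e)%:R
  else (only1 (tail e) == Some e)%:R + (only2 (tail e) == Some e)%:R.

Lemma split_weightC t1 t2 : split_weight t1 t2 =1 split_weight t2 t1.
Proof.
move=> e; rewrite /split_weight /pick_out_edge.
rewrite (@eq_pick _ _ (fun x => (tail x == tail e)
                               && (reaches t2 (head x) && reaches t1 (head x)))).
  by case: pickP => // _; rewrite addrC.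
by move=> x; rewrite [reaches t1 _ && _]andbC.
Qed.

Lemma split_weight_harmonic t1 t2 :
  harmonic (split_weight t1 t2) t1 (fun v => (reaches t1 v)%:R).
Proof.
move=> v nv; rewrite /split_weight.
under eq_bigr => e /eqP -> do [].
case: (pick_out_edgeP (fun u => reaches t1 u && reaches t2 u) v)
  => [e0 /andP[/eqP te0 /andP[r1 _]] | no_both].
  rewrite (sum_indicator_option (Some e0)) => [|e [<-]]; last by rewrite te0.
  by rewrite r1 -te0 reaches_tail.
under eq_bigr => e _ do rewrite mulrDl.
rewrite big_split /= !(sum_indicator_option _ _ _ (pick_out_edge_tail _ _)).
have only2_off : (if pick_out_edge (fun u => reaches t2 u && ~~ reaches t1 u) v
    is Some e then (reaches t1 (head e))%:R else 0) = 0 :> F.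
  by case: pick_out_edgeP => // e /andP[_ /andP[_ /negbTE ->]].
rewrite only2_off addr0.
case: (pick_out_edgeP (fun u => reaches t1 u && ~~ reaches t2 u) v)
  => [e1 /andP[/eqP te1 /andP[r1 _]] | no1].
  by rewrite r1 -te1 reaches_tail.
case rv: (reaches t1 v) => //.
have [e /andP[te r1]] := reaches_out_edge rv nv.
case r2: (reaches t2 (head e)).
  by move: (no_both e); rewrite te r1 r2.
by move: (no1 e); rewrite te r1 r2.
Qed.

End Network.

Theorem theorem2
  (V E : finType) (tail head : E -> V)
  (acyc : acyclic tail head)
  (n : nat) (s : 'I_n -> V) (t1 t2 : V)
  (s_inj : injective s)
  (s_src : forall v, is_source head v <-> exists i, v = s i)
  (t_term : forall v, is_terminal tail v <-> (v = t1 \/ v = t2))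
  (t12 : t1 != t2)
  (conn : forall i, maxflow_ge1 tail head (s i) t1 /\ maxflow_ge1 tail head (s i) t2)
  (F : finFieldType) (m : nat) (hF : #|F| = (2 ^ m)%N) :
  exists c : lin_code E F,
    recovers_sum tail head s c t1 /\ recovers_sum tail head s c t2.
Proof.
have s_head i e : head e != s i.
  by move: ((s_src (s i)).2 (ex_intro _ i erefl)) => /forallP.
have terminal t : t = t1 \/ t = t2 -> forall e, tail e != t.
  by move/(t_term t).2/forallP.
have recovers t w : t = t1 \/ t = t2 ->
    (forall i, maxflow_ge1 tail head (s i) t) ->
    harmonic tail head w t (fun v => (connect (adj tail head) v t)%:R) ->
    recovers_sum tail head s (uniform_code w) t.
  move=> tt flow harm; apply: (uniform_code_recovers tail head s_inj harm) => //.
  - by rewrite connect0.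
  - by move=> i; rewrite (maxflow_ge1_reaches tail head (flow i)).
  - exact: terminal.
  - move=> i; have [e /eqP te] := maxflow_ge1_out_edge tail head (flow i).
    by apply: contraNneq (terminal t tt e) => <-; rewrite te.
exists (uniform_code (split_weight tail head t1 t2 : E -> F)); split.
  by apply: recovers; [left | move=> i; exact: (conn i).1 | exact: split_weight_harmonic].
apply: recovers; [by right | move=> i; exact: (conn i).2 |].
apply: (eq_harmonic tail head _ (split_weight_harmonic tail head t2 t1)).
exact: split_weightC.
Qed.
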